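(* Let $G=(V,E)$ be a finite, simple, connected graph with $|V|\geq 3$ and let $d\in\mathrm{Der}(\mathcal{A}(G))$ with $d(e_i)=\sum_{k\in V}d_{ik}e_k$. If $d_{ij}\neq 0$ for some $i,j\in V$ with $i\neq j$, then $i\sim_t j$.
   Context: Throughout, $\mathbb{K}$ is a field of characteristic $0$. A graph $G=(V,E)$ has vertex set $V=\{1,\dots,n\}$ and is assumed finite, simple (no loops, no multiple edges) and connected. $\mathcal{N}(i)$ denotes the set of neighbors of vertex $i$, and $(a_{ij})$ is the adjacency matrix ($a_{ij}=1$ if $i,j$ are adjacent, $0$ otherwise). The evolution algebra $\mathcal{A}(G)$ is the $\mathbb{K}$-algebra with basis $\{e_i: i\in V\}$ and product $e_i\cdot e_i=\sum_{k\in V}a_{ik}e_k=\sum_{k\in\mathcal{N}(i)}e_k$ and $e_i\cdot e_j=0$ for $i\neq j$. A derivation of $\mathcal{A}(G)$ is a linear map $d:\mathcal{A}(G)\to\mathcal{A}(G)$ with $d(u\cdot v)=d(u)\cdot v+u\cdot d(v)$ for all $u,v$; $\mathrm{Der}(\mathcal{A}(G))$ is the space of derivations, and for $d$ in it we write $d(e_i)=\sum_{k\in V}d_{ik}e_k$. Two vertices $i,j$ are twins, written $i\sim_t j$, if $\mathcal{N}(i)=\mathcal{N}(j)$. *)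

From HB Require Import structures.
From mathcomp Require Import all_boot all_order all_algebra.
Set Implicit Arguments. Unset Strict Implicit. Unset Printing Implicit Defensive.
Import GRing.Theory.
Local Open Scope ring_scope.

Definition simple_graph (n : nat) (adj : rel 'I_n) : Prop :=
  symmetric adj /\ irreflexive adj.

Definition connected_graph (n : nat) (adj : rel 'I_n) : Prop :=
  forall i j : 'I_n, connect adj i j.

(* Elements of the evolution algebra A(G) are coordinate row vectors
   w.r.t. the natural basis (e_i); e_i is delta_mx 0 i. *)
Definition basis_vec (K : fieldType) (n : nat) (i : 'I_n) : 'rV[K]_n :=
  delta_mx 0 i.

(* Evolution product: e_i . e_i = sum_k a_ik e_k, e_i . e_j = 0 (i<>j),
   extended bilinearly. *)
Definition evmul (K : fieldType) (n : nat) (adj : rel 'I_n)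
    (u v : 'rV[K]_n) : 'rV[K]_n :=
  \row_k \sum_(i < n) u 0 i * v 0 i * (adj i k)%:R.

(* A linear map d is represented by its matrix D in the basis (e_i), with
   d(e_i) = sum_k D i k e_k, i.e. d(u) = u *m D (row-vector convention). *)
Definition is_derivation (K : fieldType) (n : nat) (adj : rel 'I_n)
    (D : 'M[K]_n) : Prop :=
  forall u v : 'rV[K]_n,
    evmul adj u v *m D = evmul adj (u *m D) v + evmul adj u (v *m D).

Definition twins (n : nat) (adj : rel 'I_n) (i j : 'I_n) : Prop :=
  forall k : 'I_n, adj i k = adj j k.

(* Applying d to e_i . e_j = 0 gives d_ij e_j^2 + d_ji e_i^2 = 0, i.e.
   d_ij a_jk + d_ji a_ik = 0 for every vertex k.  Taking for k a neighbour of
   j (which exists by connectedness) forces d_ji = - d_ij, and then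
   d_ij (a_jk - a_ik) = 0 makes the neighbourhoods of i and j agree. *)
From HB Require Import structures.
From mathcomp Require Import all_boot all_order all_algebra.
Local Open Scope ring_scope.
Import GRing.Theory.

Set Implicit Arguments.
Unset Strict Implicit.
Unset Printing Implicit Defensive.

Section EvolutionProduct.

Variables (K : fieldType) (n : nat) (adj : rel 'I_n).

Definition evsq (i : 'I_n) : 'rV[K]_n := \row_k (adj i k)%:R.

Lemma evmulC (u v : 'rV[K]_n) : evmul adj u v = evmul adj v u.
Proof. by apply/rowP => k; rewrite !mxE; apply: eq_bigr => l _; rewrite (mulrC (u 0 l)). Qed.

Lemma evmul_basisl (i : 'I_n) (v : 'rV[K]_n) :
  evmul adj (basis_vec K i) v = v 0 i *: evsq i.
Proof.
apply/rowP => k; rewrite !mxE (bigD1 i) //= big1 ?addr0.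
  by rewrite mxE !eqxx mul1r.
by move=> l /negbTE nli; rewrite mxE nli andbF !mul0r.
Qed.

Lemma evmul_basis_neq (i j : 'I_n) :
  i != j -> evmul adj (basis_vec K i) (basis_vec K j) = 0.
Proof.
by move=> /negbTE nij; rewrite evmul_basisl mxE nij andbF scale0r.
Qed.

Lemma derivation_offdiag (D : 'M[K]_n) (i j : 'I_n) :
  is_derivation adj D -> i != j ->
  D i j *: evsq j + D j i *: evsq i = 0.
Proof.
move=> HD nij; have := HD (basis_vec K i) (basis_vec K j).
rewrite evmul_basis_neq // mul0mx /basis_vec -!rowE => /esym.
by rewrite evmulC !evmul_basisl !mxE.
Qed.

Lemma derivation_offdiag_coord (D : 'M[K]_n) (i j k : 'I_n) :
  is_derivation adj D -> i != j ->
  D i j * (adj j k)%:R + D j i * (adj i k)%:R = 0.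
Proof.
move=> HD nij; have /rowP/(_ k) := derivation_offdiag HD nij.
by rewrite !mxE.
Qed.

End EvolutionProduct.

Lemma connected_has_neighbour (n : nat) (adj : rel 'I_n) (i j : 'I_n) :
  connected_graph adj -> i != j -> exists x, adj j x.
Proof.
move=> Hconn nij; have /connectP [[|x p] /= Hp Hl] := Hconn j i.
  by rewrite Hl eqxx in nij.
by case/andP: Hp => ajx _; exists x.
Qed.

Theorem lemma3p4 (K : fieldType) (Kchar0 : [pchar K] =i pred0)
  (n : nat) (adj : rel 'I_n)
  (Hsimple : simple_graph adj) (Hconn : connected_graph adj)
  (Hn : (3 <= n)%N)
  (D : 'M[K]_n) (HD : is_derivation adj D)
  (i j : 'I_n) (Hij : i != j) (Hdij : D i j != 0) :
  twins adj i j.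
Proof.
have Hk k := derivation_offdiag_coord k HD Hij.
have [x ajx] := connected_has_neighbour Hconn Hij.
have Hdji : D j i = - D i j.
  move: (Hk x); rewrite ajx mulr1; case: (adj i x) => /=.
    by rewrite mulr1 addrC => /eqP; rewrite addr_eq0 => /eqP.
  by rewrite mulr0 addr0 => dij0; rewrite dij0 eqxx in Hdij.
move=> k; move: (Hk k); rewrite Hdji.
case: (adj i k) (adj j k) => -[] //=; rewrite ?mulr1 ?mulr0 ?add0r ?addr0 => /eqP.
  by rewrite oppr_eq0 (negbTE Hdij).
by rewrite (negbTE Hdij).
Qed.
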